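(* Let $\kappa$ be an infinite cardinal and $\mathcal{U}$ any fine ultrafilter on $\kappa$. Define $\Sigma:\mathbb{Z}^\kappa\to\mathbb{Z}^\kappa/\mathcal{U}$ by $\Sigma(\mathbf{x})=[\mathbf{f}_{\mathbf{x}}]_{\mathcal{U}}$, with $\mathbb{Z}$ embedded in the ultrapower via constant functions. Then $(\mathbb{Z}^\kappa/\mathcal{U},\Sigma)$ is a ring of Euclidean integers for $\kappa$, i.e. it satisfies (0), (RA), (LA), (CA) and (PA).
   Context: Every ordinal $\alpha$ has a unique base-2 normal form $\alpha=2^{\alpha_1}+\dots+2^{\alpha_n}$ with $\alpha_1>\dots>\alpha_n$; put $L_\alpha=\{\alpha_1,\dots,\alpha_n\}$. Formal inclusion: $\alpha\sqsubseteq\beta$ iff $L_\alpha\subseteq L_\beta$, $\alpha\sqsubset\beta$ iff $L_\alpha\subsetneq L_\beta$. $\alpha\vee\beta$ is the ordinal $\gamma$ with $L_\gamma=L_\alpha\cup L_\beta$. For $\theta<\kappa$ the cone is $C(\theta)=\{\alpha<\kappa\mid\theta\sqsubset\alpha\}$; a filter on $\kappa$ is fine if it contains all cones. For $\mathbf{x}\in\mathbb{Z}^\kappa$, $\mathbf{f}_{\mathbf{x}}(\alpha)=\sum_{\beta\sqsubseteq\alpha}x_\beta$. A ring of Euclidean integers for $\kappa$ is a discretely ordered commutative integral domain $\mathbf{Z}_\kappa$ containing $\mathbb{Z}$ as an ordered subring, together with a map $\Sigma:\mathbb{Z}^\kappa\to\mathbf{Z}_\kappa$, written $\Sigma(\mathbf{x})=\sum_\alpha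 x_\alpha$, such that: (0) if only finitely many $x_\alpha\neq0$ then $\sum_\alpha x_\alpha$ is the ordinary finite sum; (RA) every element of $\mathbf{Z}_\kappa$ is $\sum_\alpha x_\alpha$ for some $\mathbf{x}\in\mathbb{Z}^\kappa$; (LA) $u\sum_\alpha x_\alpha+v\sum_\alpha y_\alpha=\sum_\alpha(ux_\alpha+vy_\alpha)$ for all $u,v\in\mathbb{Z}$; (CA) if there is $\theta<\kappa$ with $\mathbf{f}_{\mathbf{x}}(\delta)\le\mathbf{f}_{\mathbf{y}}(\delta)$ for all $\delta<\kappa$ with $\theta\sqsubseteq\delta$, then $\sum_\alpha x_\alpha\le\sum_\alpha y_\alpha$; (PA) $(\sum_\alpha x_\alpha)(\sum_\beta y_\beta)=\sum_\gamma z_\gamma$ where $z_\gamma=\sum_{\alpha\vee\beta=\gamma}x_\alpha y_\beta$. *)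

From HB Require Import structures.
From mathcomp Require Import all_boot all_order all_algebra.
From mathcomp Require Import boolp classical_sets cardinality fsbigop.
Set Implicit Arguments. Unset Strict Implicit. Unset Printing Implicit Defensive.
Import Order.TTheory GRing.Theory Num.Theory.
Local Open Scope classical_set_scope.
Local Open Scope ring_scope.

(* The ordinals below kappa.  kappa is represented by a type K (its elements
   are the ordinals alpha < kappa) equipped with its ordinal order ltK.       *)

Definition strict_well_order {K : Type} (ltK : K -> K -> Prop) : Prop :=
  [/\ (forall a, ~ ltK a a),
      (forall a b c, ltK a b -> ltK b c -> ltK a c),
      (forall a b, [\/ ltK a b, a = b | ltK b a]) &
      well_founded ltK].

Definition infinite_cardinal {K : Type} (ltK : K -> K -> Prop) : Prop :=
  (exists f : nat -> K, injective f) /\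
  (forall a : K, ~ exists f : K -> K, injective f /\ forall k, ltK (f k) a).

(* For base-2
   normal forms this is exactly the ordinal order. *)
Definition lexmax_lt {K : eqType} (ltK : K -> K -> Prop) (S T : seq K) : Prop :=
  exists c, [/\ c \in T, c \notin S &
                forall d, ltK c d -> (d \in S) = (d \in T)].

(* L alpha is (an enumeration of) the set L_alpha = {alpha_1,...,alpha_n} of
   exponents of the base-2 normal form alpha = 2^alpha_1 + ... + 2^alpha_n.
   The map alpha |-> L_alpha is characterised as the (unique, since (K,ltK) is
   a well-order) order isomorphism between (K, ltK) and the finite subsets of K
   ordered by lexmax_lt: every finite set of ordinals < kappa is L_alpha for
   some alpha < kappa, and alpha < beta iff max(L_alpha Delta L_beta) is in
   L_beta. *)
Definition base2_normal_form {K : eqType} (ltK : K -> K -> Prop)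
    (L : K -> seq K) : Prop :=
  (forall s : seq K, exists a, L a =i s) /\
  (forall a b, ltK a b <-> lexmax_lt ltK (L a) (L b)).

Section Formal.
Variables (K : choiceType) (L : K -> seq K).

Definition fsub (a b : K) : Prop := {subset L a <= L b}.
Definition fsubS (a b : K) : Prop := fsub a b /\ ~ fsub b a.
Definition fjoin_is (a b c : K) : Prop := L c =i L a ++ L b.

Definition cone (t : K) : set K := [set a | fsubS t a].

Definition fx (x : K -> int) (a : K) : int := \sum_(b \in [set b | fsub b a]) x b.

Definition zprod (x y : K -> int) (c : K) : int :=
  \sum_(p \in [set p : K * K | fjoin_is p.1 p.2 c]) (x p.1 * y p.2).

Record euclidean_integers (R : Type) (zero one : R) (add mul : R -> R -> R)
    (opp : R -> R) (le : R -> R -> Prop) (emb : int -> R)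
    (Sig : (K -> int) -> R) : Prop := {
  ei_addA : forall a b c, add a (add b c) = add (add a b) c;
  ei_addC : forall a b, add a b = add b a;
  ei_add0 : forall a, add zero a = a;
  ei_addN : forall a, add (opp a) a = zero;
  ei_mulA : forall a b c, mul a (mul b c) = mul (mul a b) c;
  ei_mulC : forall a b, mul a b = mul b a;
  ei_mul1 : forall a, mul one a = a;
  ei_mulD : forall a b c, mul a (add b c) = add (mul a b) (mul a c);
  ei_oneNZ : one <> zero;
  ei_domain : forall a b, mul a b = zero -> a = zero \/ b = zero;
  ei_le_refl : forall a, le a a;
  ei_le_anti : forall a b, le a b -> le b a -> a = b;
  ei_le_trans : forall a b c, le a b -> le b c -> le a c;
  ei_le_total : forall a b, le a b \/ le b a;
  ei_le_add : forall a b c, le a b -> le (add a c) (add b c);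
  ei_le_mul : forall a b, le zero a -> le zero b -> le zero (mul a b);
  ei_discrete : forall a, le zero a -> a <> zero -> le one a;
  ei_emb0 : emb 0 = zero;
  ei_emb1 : emb 1 = one;
  ei_embD : forall m n, emb (m + n) = add (emb m) (emb n);
  ei_embM : forall m n, emb (m * n) = mul (emb m) (emb n);
  ei_embN : forall m, emb (- m) = opp (emb m);
  ei_emb_inj : injective emb;
  ei_emb_le : forall m n, le (emb m) (emb n) <-> (m <= n)%R;
  ei_fin : forall x : K -> int, finite_set [set a | x a != 0] ->
      Sig x = emb (\sum_(a \in [set: K]) x a);
  ei_RA : forall r : R, exists x, Sig x = r;
  ei_LA : forall (u v : int) (x y : K -> int),
      add (mul (emb u) (Sig x)) (mul (emb v) (Sig y)) =
      Sig (fun a => u * x a + v * y a);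
  ei_CA : forall x y : K -> int,
      (exists t, forall d, fsub t d -> fx x d <= fx y d) -> le (Sig x) (Sig y);
  ei_PA : forall x y : K -> int, mul (Sig x) (Sig y) = Sig (zprod x y)
}.

End Formal.

Definition ultrafilter {K : Type} (U : set (set K)) : Prop :=
  [/\ U setT, ~ U set0,
      (forall A B, A `<=` B -> U A -> U B),
      (forall A B, U A -> U B -> U (A `&` B)) &
      (forall A, U A \/ U (~` A))].

Definition fine {K : choiceType} (L : K -> seq K) (U : set (set K)) : Prop :=
  forall t, U (cone L t).

Section Ultrapower.
Variables (K : Type) (U : set (set K)).

Definition upclass (f : K -> int) : set (K -> int) := [set g | U [set k | f k = g k]].

Definition ultrapower : Type := {A : set (K -> int) | exists f, A = upclass f}.

Definition upcls (f : K -> int) : ultrapower := exist _ (upclass f) (ex_intro _ f erefl).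
Definition uprep (a : ultrapower) : K -> int := projT1 (cid (proj2_sig a)).

Definition up_zero : ultrapower := upcls (fun _ => 0).
Definition up_one : ultrapower := upcls (fun _ => 1).
Definition up_add (a b : ultrapower) : ultrapower :=
  upcls (fun k => uprep a k + uprep b k).
Definition up_mul (a b : ultrapower) : ultrapower :=
  upcls (fun k => uprep a k * uprep b k).
Definition up_opp (a : ultrapower) : ultrapower := upcls (fun k => - uprep a k).
Definition up_le (a b : ultrapower) : Prop := U [set k | uprep a k <= uprep b k].
Definition up_emb (n : int) : ultrapower := upcls (fun _ => n).

End Ultrapower.

Definition up_Sigma {K : choiceType} (L : K -> seq K) (U : set (set K))
    (x : K -> int) : ultrapower U := upcls U (fx L x).

(* [finmap] comes first so that [Defs.fsub] shadows [finmap.fsub]. *)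
From mathcomp Require Import finmap.
From Pilot Require Import Defs.
From HB Require Import structures.
From mathcomp Require Import all_boot all_order all_algebra.
From mathcomp Require Import boolp classical_sets cardinality fsbigop.
Set Implicit Arguments. Unset Strict Implicit. Unset Printing Implicit Defensive.
Import Order.TTheory GRing.Theory Num.Theory.
Local Open Scope classical_set_scope.
Local Open Scope ring_scope.

(** Sigma sends x to the class of its cumulative sums f_x, so the ring and
   order axioms are Los's theorem for Z.  Since L is an order isomorphism onto
   the finite sets of ordinals, formal inclusion is inclusion of finite sets:
   every alpha has finitely many formal subsets, so x |-> f_x is linear and is
   inverted by Moebius inversion along the well-order (RA), and f_x f_y = f_z
   for the join convolution z of x and y, because p \/ q is formally included
   in alpha iff p and q are (PA).  A fine ultrafilter contains every cone,
   which gives (CA), and (0) because f_x is constant on a cone when x has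
   finite support. *)

Section Ultrapower.
Variables (K : Type) (U : set (set K)).
Hypothesis U_ultra : ultrafilter U.

Lemma ultraT : U setT. Proof. by case: U_ultra. Qed.
Lemma ultra_neq0 : ~ U set0. Proof. by case: U_ultra. Qed.
Lemma ultraS A B : A `<=` B -> U A -> U B.
Proof. by case: U_ultra => _ _ + _ _; apply. Qed.
Lemma ultraI A B : U A -> U B -> U (A `&` B).
Proof. by case: U_ultra => _ _ _ + _; apply. Qed.
Lemma ultraC A : U A \/ U (~` A). Proof. by case: U_ultra. Qed.

Lemma ultraS2 (A B C : set K) :
  (forall k, A k -> B k -> C k) -> U A -> U B -> U C.
Proof. by move=> ABC UA UB; apply: ultraS _ (ultraI UA UB) => k []; apply: ABC. Qed.

Lemma ultra_const (P : Prop) : U [set _ | P] -> P.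
Proof. by move=> UP; apply: contrapT => nP; apply/ultra_neq0/(ultraS _ UP). Qed.

Lemma upclsP f g : upcls U f = upcls U g <-> U [set k | f k = g k].
Proof.
split=> [/(congr1 sval) /= fg | Ufg].
  have gg : upclass U g g by apply: ultraS _ ultraT => k.
  by rewrite -fg in gg.
apply: eq_sig_hprop => [A|/=]; first by move=> *; apply: Prop_irrelevance.
by apply/funext => h; apply/propext; split; apply: ultraS2 Ufg => k /= ->.
Qed.

Lemma upcls_ext f g : f =1 g -> upcls U f = upcls U g.
Proof. by move=> /funext ->. Qed.

Lemma uprepK (a : ultrapower U) : upcls U (uprep a) = a.
Proof.
rewrite /uprep; case: a => A A_cls /=; case: cid => f Af /=.
by apply: eq_sig_hprop => [?|/=]; [apply: Prop_irrelevance | rewrite Af].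
Qed.

Lemma up_ind (P : ultrapower U -> Prop) :
  (forall f, P (upcls U f)) -> forall a, P a.
Proof. by move=> Pcls a; rewrite -(uprepK a). Qed.

Lemma uprep_upcls f : U [set k | uprep (upcls U f) k = f k].
Proof. by apply/upclsP; rewrite uprepK. Qed.

Lemma up_addE f g :
  up_add (upcls U f) (upcls U g) = upcls U (fun k => f k + g k).
Proof. by apply/upclsP; apply: ultraS2 (uprep_upcls f) (uprep_upcls g) => k /= -> ->. Qed.

Lemma up_mulE f g :
  up_mul (upcls U f) (upcls U g) = upcls U (fun k => f k * g k).
Proof. by apply/upclsP; apply: ultraS2 (uprep_upcls f) (uprep_upcls g) => k /= -> ->. Qed.

Lemma up_oppE f : up_opp (upcls U f) = upcls U (fun k => - f k).
Proof. by apply/upclsP; apply: ultraS _ (uprep_upcls f) => k /= ->. Qed.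

Lemma up_leE f g : up_le (upcls U f) (upcls U g) <-> U [set k | f k <= g k].
Proof.
have Ufg := ultraI (uprep_upcls f) (uprep_upcls g).
by split; apply: ultraS2 Ufg => k [/= -> ->].
Qed.

Lemma up_addA : associative (@up_add K U).
Proof.
elim/up_ind=> f; elim/up_ind=> g; elim/up_ind=> h.
by rewrite !up_addE; apply: upcls_ext => k; apply: addrA.
Qed.

Lemma up_addC : commutative (@up_add K U).
Proof.
elim/up_ind=> f; elim/up_ind=> g.
by rewrite !up_addE; apply: upcls_ext => k; apply: addrC.
Qed.

Lemma up_add0 : left_id (up_zero U) (@up_add K U).
Proof. by elim/up_ind=> f; rewrite up_addE; apply: upcls_ext => k; apply: add0r. Qed.

Lemma up_addN : left_inverse (up_zero U) (@up_opp K U) (@up_add K U).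
Proof.
by elim/up_ind=> f; rewrite up_oppE up_addE; apply: upcls_ext => k; apply: addNr.
Qed.

Lemma up_mulA : associative (@up_mul K U).
Proof.
elim/up_ind=> f; elim/up_ind=> g; elim/up_ind=> h.
by rewrite !up_mulE; apply: upcls_ext => k; apply: mulrA.
Qed.

Lemma up_mulC : commutative (@up_mul K U).
Proof.
elim/up_ind=> f; elim/up_ind=> g.
by rewrite !up_mulE; apply: upcls_ext => k; apply: mulrC.
Qed.

Lemma up_mul1 : left_id (up_one U) (@up_mul K U).
Proof. by elim/up_ind=> f; rewrite up_mulE; apply: upcls_ext => k; apply: mul1r. Qed.

Lemma up_mulDr : right_distributive (@up_mul K U) (@up_add K U).
Proof.
elim/up_ind=> f; elim/up_ind=> g; elim/up_ind=> h.
by rewrite !(up_addE, up_mulE); apply: upcls_ext => k; apply: mulrDr.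
Qed.

Lemma up_emb_inj : injective (@up_emb K U).
Proof. by move=> m n /upclsP /ultra_const. Qed.

Lemma up_one_neq0 : up_one U <> up_zero U.
Proof. by move/up_emb_inj. Qed.

Lemma up_mul_eq0 (a b : ultrapower U) :
  up_mul a b = up_zero U -> a = up_zero U \/ b = up_zero U.
Proof.
elim/up_ind: a => f; elim/up_ind: b => g; rewrite up_mulE => /upclsP fg0.
have [f0|f_neq0] := ultraC [set k | f k = 0]; first by left; apply/upclsP.
have [g0|g_neq0] := ultraC [set k | g k = 0]; first by right; apply/upclsP.
exfalso; apply: ultra_neq0; apply: ultraS _ (ultraI fg0 (ultraI f_neq0 g_neq0)).
by move=> k [/= /eqP]; rewrite mulf_eq0 => /orP[] /eqP k0 [] // _; apply.
Qed.

Lemma up_le_refl (a : ultrapower U) : up_le a a.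
Proof. by elim/up_ind: a => f; apply/up_leE; apply: ultraS _ ultraT => k _ /=. Qed.

Lemma up_le_anti (a b : ultrapower U) : up_le a b -> up_le b a -> a = b.
Proof.
elim/up_ind: a => f; elim/up_ind: b => g; move=> /up_leE fg /up_leE gf.
apply/upclsP; apply: ultraS2 fg gf => k /= fg_k gf_k.
by apply/eqP; rewrite eq_le fg_k gf_k.
Qed.

Lemma up_le_trans (a b c : ultrapower U) : up_le a b -> up_le b c -> up_le a c.
Proof.
elim/up_ind: a => f; elim/up_ind: b => g; elim/up_ind: c => h.
move=> /up_leE fg /up_leE gh; apply/up_leE.
by apply: ultraS2 fg gh => k; apply: le_trans.
Qed.

Lemma up_le_total (a b : ultrapower U) : up_le a b \/ up_le b a.
Proof.
elim/up_ind: a => f; elim/up_ind: b => g; rewrite !up_leE.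
have [fg|gf] := ultraC [set k | f k <= g k]; [left | right] => //.
by apply: ultraS _ gf => k /= /negP; rewrite -ltNge => /ltW.
Qed.

Lemma up_leD2r (a b c : ultrapower U) :
  up_le a b -> up_le (up_add a c) (up_add b c).
Proof.
elim/up_ind: a => f; elim/up_ind: b => g; elim/up_ind: c => h.
by rewrite !up_addE !up_leE; apply: ultraS => k /=; rewrite lerD2r.
Qed.

Lemma up_mul_ge0 (a b : ultrapower U) :
  up_le (up_zero U) a -> up_le (up_zero U) b -> up_le (up_zero U) (up_mul a b).
Proof.
elim/up_ind: a => f; elim/up_ind: b => g; rewrite up_mulE !up_leE.
by apply: ultraS2 => k; apply: mulr_ge0.
Qed.

Lemma up_ge1 (a : ultrapower U) :
  up_le (up_zero U) a -> a <> up_zero U -> up_le (up_one U) a.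
Proof.
elim/up_ind: a => f; rewrite !up_leE => f_ge0 f_neq0.
have [f0|Nf0] := ultraC [set k | f k = 0]; first by case: f_neq0; apply/upclsP.
apply: ultraS2 f_ge0 Nf0 => k /= f_ge0 /eqP Nf0.
by rewrite -gtz0_ge1 lt_def Nf0.
Qed.

Lemma up_embD m n : up_emb U (m + n) = up_add (up_emb U m) (up_emb U n).
Proof. by rewrite up_addE. Qed.

Lemma up_embM m n : up_emb U (m * n) = up_mul (up_emb U m) (up_emb U n).
Proof. by rewrite up_mulE. Qed.

Lemma up_embN m : up_emb U (- m) = up_opp (up_emb U m).
Proof. by rewrite up_oppE. Qed.

Lemma up_emb_le m n : up_le (up_emb U m) (up_emb U n) <-> m <= n.
Proof.
by rewrite up_leE; split=> [/ultra_const | mn]; last apply: ultraS _ ultraT => k.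
Qed.

End Ultrapower.

Section FormalInclusion.
Variables (K : choiceType) (ltK : K -> K -> Prop) (L : K -> seq K).
Hypothesis ltK_wo : strict_well_order ltK.
Hypothesis L_nf : base2_normal_form ltK L.

Local Notation fsubs a := [set b | fsub L b a].

Lemma L_inj a b : L a =i L b -> a = b.
Proof.
case: ltK_wo => _ _ ltK_tri _; case: L_nf => _ ltK_lexmax ab.
have [/ltK_lexmax [c [cb /negP[]]]|//|/ltK_lexmax [c [ca /negP[]]]] := ltK_tri a b.
  by rewrite ab.
by rewrite -ab.
Qed.

Lemma fsub_anti a b : fsub L a b -> fsub L b a -> a = b.
Proof. by move=> ab ba; apply: L_inj => c; apply/idP/idP; [apply: ab | apply: ba]. Qed.

Lemma fsubS_lt a b : fsubS L a b -> ltK a b.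
Proof.
case: ltK_wo => _ _ ltK_tri _; case: L_nf => _ ltK_lexmax [ab Nba].
have [//|eq_ab|/ltK_lexmax [c [ca /negP[]]]] := ltK_tri a b; last exact: ab.
by case: Nba; rewrite eq_ab.
Qed.

Definition Linv (s : seq K) : K := projT1 (cid (L_nf.1 s)).

Lemma LinvE s : L (Linv s) =i s.
Proof. exact: (projT2 (cid (L_nf.1 s))). Qed.

Lemma finite_fsub a : finite_set (fsubs a).
Proof.
pose sub_La := fpowerset [fset c | c in L a]%fset.
apply: (finite_subfset [fset Linv B | B : {fset K} in sub_La]%fset).
move=> b /= ba; apply/imfsetP; exists [fset c | c in L b]%fset.
  by rewrite fpowersetE; apply/fsubsetP => c; rewrite !inE => /ba.
by apply: L_inj => c; rewrite LinvE inE.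
Qed.

Lemma fxD1 x a : fx L x a = x a + \sum_(b \in [set b | fsubS L b a]) x b.
Proof.
rewrite /fx (fsbigD1 a _ _ (finite_fsub a)) //; congr (_ + _); apply: eq_fsbigl.
apply/seteqP; split=> b /= [ba Nab]; split=> //.
  by move=> ab; apply: Nab; apply: fsub_anti.
by move=> eq_ba; apply: Nab; rewrite eq_ba.
Qed.

Lemma fx_lin (u v : int) x y a :
  fx L (fun b => u * x b + v * y b) a = u * fx L x a + v * fx L y a.
Proof. by rewrite /fx fsbig_split ?mulr_fsumr //; apply: finite_fsub. Qed.

Lemma ltK_wf : well_founded ltK. Proof. by case: ltK_wo. Qed.

(* The [pselect] guard always succeeds, by [fsubS_lt]; it only supplies the
   proof of [ltK b a] that [Fix] needs. *)
Definition mobius (g : K -> int) : K -> int :=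
  Fix ltK_wf (fun _ => int) (fun a mobius_lt =>
    g a - \sum_(b \in [set b | fsubS L b a])
            if pselect (ltK b a) is left ba then mobius_lt b ba else 0).

Lemma mobiusE g a : mobius g a = g a - \sum_(b \in [set b | fsubS L b a]) mobius g b.
Proof.
rewrite /mobius Fix_eq => [|c h h' eq_h]; last first.
  by congr (_ - _); apply: eq_fsbigr => b _; case: pselect.
congr (_ - _); apply: eq_fsbigr => b /set_mem /fsubS_lt ba.
by case: pselect.
Qed.

Lemma fx_mobius g : fx L (mobius g) =1 g.
Proof. by move=> a; rewrite fxD1 [mobius g a]mobiusE subrK. Qed.

Lemma fx_finite_support x : finite_set [set b | x b != 0] ->
  exists t, forall a, fsub L t a -> fx L x a = \sum_(b \in [set: K]) x b.
Proof.
move=> x_fin; exists (Linv (flatten [seq L b | b <- fset_set [set b | x b != 0]])).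
move=> a ta; apply: fsbig_widen => // b [_ /= Nba]; apply/eqP/negPn/negP => xb_neq0.
apply: Nba => c cb; apply: ta; rewrite LinvE; apply/flattenP; exists (L b) => //.
by apply/mapP; exists b; rewrite // in_fset_set // inE.
Qed.

Definition fjoin p q := Linv (L p ++ L q).

Lemma fjoin_isP p q c : fjoin_is L p q c <-> c = fjoin p q.
Proof.
split=> [pqc | ->]; last exact: LinvE.
by apply: L_inj => d; rewrite LinvE pqc.
Qed.

Lemma fsub_fjoin p q a : fsub L (fjoin p q) a <-> fsub L p a /\ fsub L q a.
Proof.
split=> [pq_a | [pa qa] c]; last by rewrite LinvE mem_cat => /orP[/pa | /qa].
by split=> c cL; apply: pq_a; rewrite LinvE mem_cat cL ?orbT.
Qed.

Lemma fx_mul x y a :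
  fx L x a * fx L y a = \sum_(pq \in fsubs a `*` fsubs a) x pq.1 * y pq.2.
Proof.
rewrite /fx mulr_fsuml; under eq_fsbigr do rewrite mulr_fsumr.
by apply: pair_fsbig; apply: finite_fsub.
Qed.

Lemma zprod_fsub x y a c : fsub L c a ->
  zprod L x y c = \sum_(pq \in fsubs a `*` fsubs a)
                    if c == fjoin pq.1 pq.2 then x pq.1 * y pq.2 else 0.
Proof.
move=> ca; rewrite -(fsbig_widen [set pq | fjoin_is L pq.1 pq.2 c]).
- by apply: eq_fsbigr => pq /set_mem /fjoin_isP ->; rewrite eqxx.
- by move=> pq /fjoin_isP eq_c; apply/fsub_fjoin; rewrite -eq_c.
by move=> pq [_ /= Npq]; case: eqP => // /fjoin_isP.
Qed.

Lemma fx_zprod x y a : fx L x a * fx L y a = fx L (zprod L x y) a.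
Proof.
have A_fin := finite_fsub a; rewrite fx_mul /fx.
under [RHS]eq_fsbigr => c /set_mem ca do rewrite (zprod_fsub _ _ ca).
rewrite exchange_fsbig //; last exact: finite_setX.
apply: eq_fsbigr => -[p q] /set_mem /= pq_a.
rewrite (fsbigD1 (fjoin p q)) //= ?eqxx; last exact/fsub_fjoin.
by rewrite fsbig1 ?addr0 // => c [_ /eqP /negPf ->].
Qed.

End FormalInclusion.

Section EuclideanUltrapower.
Variables (K : choiceType) (ltK : K -> K -> Prop) (L : K -> seq K).
Variable U : set (set K).
Hypothesis ltK_wo : strict_well_order ltK.
Hypothesis L_nf : base2_normal_form ltK L.
Hypothesis U_ultra : ultrafilter U.
Hypothesis U_fine : fine L U.

Lemma up_Sigma_fin x : finite_set [set a | x a != 0] ->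
  up_Sigma L U x = up_emb U (\sum_(a \in [set: K]) x a).
Proof.
move=> /(fx_finite_support L_nf) [t fx_t]; apply/(upclsP U_ultra).
by apply: (ultraS U_ultra) _ (U_fine t) => a [ta _]; apply: fx_t.
Qed.

Lemma up_Sigma_surj r : exists x, up_Sigma L U x = r.
Proof.
exists (mobius L ltK_wo (uprep r)); rewrite -[RHS]uprepK.
by apply: upcls_ext; apply: fx_mobius.
Qed.

Lemma up_Sigma_lin (u v : int) x y :
  up_add (up_mul (up_emb U u) (up_Sigma L U x)) (up_mul (up_emb U v) (up_Sigma L U y))
  = up_Sigma L U (fun a => u * x a + v * y a).
Proof.
rewrite !(up_mulE U_ultra) (up_addE U_ultra); apply: upcls_ext => a.
by rewrite (fx_lin ltK_wo L_nf).
Qed.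

Lemma up_Sigma_le x y :
  (exists t, forall a, fsub L t a -> fx L x a <= fx L y a) ->
  up_le (up_Sigma L U x) (up_Sigma L U y).
Proof.
move=> [t fx_le]; apply/(up_leE U_ultra).
by apply: (ultraS U_ultra) _ (U_fine t) => a [ta _]; apply: fx_le.
Qed.

Lemma up_Sigma_mul x y :
  up_mul (up_Sigma L U x) (up_Sigma L U y) = up_Sigma L U (zprod L x y).
Proof.
rewrite (up_mulE U_ultra); apply: upcls_ext => a.
exact: (fx_zprod ltK_wo L_nf).
Qed.

End EuclideanUltrapower.

Theorem mainTheorem3 (K : choiceType) (ltK : K -> K -> Prop) (L : K -> seq K)
    (U : set (set K)) :
  strict_well_order ltK -> infinite_cardinal ltK -> base2_normal_form ltK L ->
  ultrafilter U -> fine L U ->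
  euclidean_integers L (up_zero U) (up_one U) (@up_add K U) (@up_mul K U)
    (@up_opp K U) (@up_le K U) (@up_emb K U) (up_Sigma L U).
Proof.
move=> wo _ nf ultra fineU.
exact: (Build_euclidean_integers
  (up_addA ultra) (up_addC ultra) (up_add0 ultra) (up_addN ultra)
  (up_mulA ultra) (up_mulC ultra) (up_mul1 ultra) (up_mulDr ultra)
  (up_one_neq0 ultra) (up_mul_eq0 ultra)
  (up_le_refl ultra) (up_le_anti ultra) (up_le_trans ultra) (up_le_total ultra)
  (up_leD2r ultra) (up_mul_ge0 ultra) (up_ge1 ultra)
  erefl erefl (up_embD ultra) (up_embM ultra) (up_embN ultra)
  (up_emb_inj ultra) (up_emb_le ultra)
  (up_Sigma_fin nf ultra fineU) (up_Sigma_surj wo nf)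
  (up_Sigma_lin wo nf ultra) (up_Sigma_le ultra fineU) (up_Sigma_mul wo nf ultra)).
Qed.
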